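(* Let $\mu$ be a fuzzy sub $\Gamma$-hypersemigroup of a fuzzy $\Gamma$-hypersemigroup $(M,\circ)$. Then $\mu$ is a fuzzy $\Gamma$-hyper bi-ideal of $(M,\circ)$ if and only if $(\mu\circ\alpha\circ\chi_M)\circ\beta\circ\mu\subseteq\mu$ for all $\alpha,\beta\in\Gamma$.
   Context: $M,\Gamma$ are nonempty sets; a fuzzy subset of $M$ is a map $M\to[0,1]$. A fuzzy $\Gamma$-hyperoperation assigns to each $(a,\gamma,b)\in M\times\Gamma\times M$ a fuzzy subset $a\circ\gamma\circ b$. For $a\in M$ and fuzzy $\mu$: $(a\circ\gamma\circ\mu)(r)=\bigvee_{t\in M}((a\circ\gamma\circ t)(r)\wedge\mu(t))$ if $\mu\ne0$, else $0$; $(\mu\circ\gamma\circ a)(r)=\bigvee_{t\in M}(\mu(t)\wedge(t\circ\gamma\circ a)(r))$ if $\mu\ne0$, else $0$. For fuzzy $\mu,\nu$: $(\mu\circ\gamma\circ\nu)(t)=\bigvee_{p,q\in M}(\mu(p)\wedge(p\circ\gamma\circ q)(t)\wedge\nu(q))$. $(M,\circ)$ is a fuzzy $\Gamma$-hypersemigroup if $(a\circ\alpha\circ b)\circ\beta\circ c=a\circ\alpha\circ(b\circ\beta\circ c)$ for all $a,b,c\in M$, $\alpha,\beta\in\Gamma$. $\chi_M$ is the constant function $1$. For fuzzy sets, $\mu\subseteq\nu$ means $\mu(x)\le\nu(x)$ for all $x$. A fuzzy sub $\Gamma$-hypersemigroup is a fuzzy subset $\mu$ with $\mu\circ\gamma\circ\mu\subseteq\mu$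 for all $\gamma\in\Gamma$. A fuzzy $\Gamma$-hyper bi-ideal is a fuzzy sub $\Gamma$-hypersemigroup $\mu$ with $(\mu\circ\alpha\circ y)\circ\beta\circ\mu\subseteq\mu$ for all $y\in M$, $\alpha,\beta\in\Gamma$. *)

From mathcomp Require Import all_boot all_order all_algebra.
From mathcomp Require Import boolp classical_sets reals.
Set Implicit Arguments. Unset Strict Implicit. Unset Printing Implicit Defensive.
Import Order.TTheory GRing.Theory Num.Theory.
Local Open Scope ring_scope.
Local Open Scope classical_set_scope.

Section Fuzzy.
Variables (R : realType) (M G : Type).

Definition is_fuzzy (mu : M -> R) : Prop := forall x, 0 <= mu x <= 1.

Definition is_fuzzy_hop (hop : M -> G -> M -> M -> R) : Prop :=
  forall a g b, is_fuzzy (hop a g b).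

Definition fzero (mu : M -> R) : Prop := forall x, mu x = 0.

Definition el_fz (hop : M -> G -> M -> M -> R) (a : M) (g : G) (mu : M -> R) : M -> R :=
  fun r => if pselect (fzero mu) then 0
           else sup (range (fun t => Num.min (hop a g t r) (mu t))).

Definition fz_el (hop : M -> G -> M -> M -> R) (mu : M -> R) (g : G) (a : M) : M -> R :=
  fun r => if pselect (fzero mu) then 0
           else sup (range (fun t => Num.min (mu t) (hop t g a r))).

Definition fz_fz (hop : M -> G -> M -> M -> R) (mu : M -> R) (g : G) (nu : M -> R) : M -> R :=
  fun t => sup (range (fun pq : M * M =>
             Num.min (mu pq.1) (Num.min (hop pq.1 g pq.2 t) (nu pq.2)))).

Definition chi_M : M -> R := fun _ => 1.

Definition fsubset (mu nu : M -> R) : Prop := forall x, mu x <= nu x.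

Definition fuzzy_GH_semigroup (hop : M -> G -> M -> M -> R) : Prop :=
  is_fuzzy_hop hop /\
  forall (a b c : M) (al be : G),
    fz_el hop (hop a al b) be c = el_fz hop a al (hop b be c).

Definition fuzzy_sub_GH_semigroup (hop : M -> G -> M -> M -> R) (mu : M -> R) : Prop :=
  is_fuzzy mu /\ forall g, fsubset (fz_fz hop mu g mu) mu.

Definition fuzzy_GH_bi_ideal (hop : M -> G -> M -> M -> R) (mu : M -> R) : Prop :=
  fuzzy_sub_GH_semigroup hop mu /\
  forall (y : M) (al be : G), fsubset (fz_fz hop (fz_el hop mu al y) be mu) mu.

End Fuzzy.

(* For mu not identically 0, (mu o al o chi_M)(x) is the supremum over y of
   (mu o al o y)(x): each term min (mu p) (min (hop p al q x) 1) of the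
   left-hand side is a term of (mu o al o q)(x), and conversely each term of
   (mu o al o y)(x) is a term of the left-hand side with q = y.  Since a minimum with a supremum is
   dominated term by term, the bi-ideal inclusions for all y are equivalent to
   the single inclusion with chi_M. *)
From mathcomp Require Import all_boot all_order all_algebra.
From mathcomp Require Import boolp classical_sets reals.
Import Order.TTheory GRing.Theory Num.Theory.
Local Open Scope ring_scope.
Local Open Scope classical_set_scope.

Section SupRange.
Variables (R : realType) (I : Type).
Implicit Types (f : I -> R) (b c : R).

Lemma sup_range_le f b : inhabited I -> (forall i, f i <= b) -> sup (range f) <= b.
Proof.
move=> [i] fb; apply: ge_sup; first by exists (f i), i.
by move=> _ [j _ <-].
Qed.

Lemma le_sup_range f b i : (forall j, f j <= b) -> f i <= sup (range f).
Proof.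
move=> fb; apply: ub_le_sup; last by exists i.
by exists b => _ [j _ <-].
Qed.

Lemma min_sup_range_le f c b : inhabited I ->
  (forall i, Num.min (f i) c <= b) -> Num.min (sup (range f)) c <= b.
Proof.
move=> I0 fcb; have [cb|bc] := leP c b; first by rewrite ge_min cb orbT.
have fb i : f i <= b.
  by have := fcb i; rewrite ge_min [c <= b]leNgt bc orbF.
by rewrite ge_min sup_range_le.
Qed.

End SupRange.

Section FuzzyProducts.
Variables (R : realType) (M G : Type) (hop : M -> G -> M -> M -> R).
Hypotheses (M0 : inhabited M) (hop_fuzzy : is_fuzzy_hop hop).
Variable mu : M -> R.
Hypothesis mu_fuzzy : is_fuzzy mu.

Let MM0 : inhabited (M * M).
Proof. by case: M0 => m; constructor; exact: (m, m). Qed.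

Let mu_ge0 x : 0 <= mu x. Proof. by case/andP: (mu_fuzzy x). Qed.
Let mu_le1 x : mu x <= 1. Proof. by case/andP: (mu_fuzzy x). Qed.
Let hop_ge0 a g b x : 0 <= hop a g b x. Proof. by case/andP: (hop_fuzzy a g b x). Qed.
Let hop_le1 a g b x : hop a g b x <= 1. Proof. by case/andP: (hop_fuzzy a g b x). Qed.

Lemma le_fz_fz (nu : M -> R) g p q t :
  Num.min (nu p) (Num.min (hop p g q t) (mu q)) <= fz_fz hop nu g mu t.
Proof.
apply: (@le_sup_range _ _ _ 1 (p, q)) => -[p' q'] /=.
by rewrite !ge_min mu_le1 !orbT.
Qed.

Lemma fz_fz_le_right (nu : M -> R) g t :
  (forall p q, Num.min (nu p) (Num.min (hop p g q t) (mu q)) <= mu t) ->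
  fz_fz hop nu g mu t <= mu t.
Proof. by move=> le_t; apply: sup_range_le => // -[p q]; exact: le_t. Qed.

Lemma fzero_fz_fz_le (nu : M -> R) g t : fzero mu -> fz_fz hop nu g mu t <= mu t.
Proof.
move=> mu0; apply: fz_fz_le_right => p q.
by rewrite (mu0 t) -(mu0 q) !ge_min lexx !orbT.
Qed.

Lemma fz_fz_subl (nu nu' : M -> R) g :
  fsubset nu nu' -> fsubset (fz_fz hop nu g mu) (fz_fz hop nu' g mu).
Proof.
move=> nu_nu' t; apply: sup_range_le => // -[p q] /=.
by apply: le_trans (le_fz_fz _ _ p q t); apply: le_min2.
Qed.

Lemma le_fz_el g q p x : ~ fzero mu ->
  Num.min (mu p) (hop p g q x) <= fz_el hop mu g q x.
Proof.
move=> mu_nz; rewrite /fz_el; case: pselect => [/mu_nz //|? /=].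
by apply: (@le_sup_range _ _ _ 1 p) => j; rewrite ge_min mu_le1.
Qed.

Lemma fz_el_sub_fz_chi g y :
  fsubset (fz_el hop mu g y) (fz_fz hop mu g (@chi_M R M)).
Proof.
move=> x; have chi_term p :
    Num.min (mu p) (Num.min (hop p g y x) (@chi_M R M y))
      <= fz_fz hop mu g (@chi_M R M) x.
  apply: (@le_sup_range _ _ _ 1 (p, y)) => -[p' q'] /=.
  by rewrite /chi_M !ge_min lexx !orbT.
rewrite /fz_el; case: pselect => ? /=.
  case: M0 => p; apply: le_trans (chi_term p).
  by rewrite !le_min mu_ge0 hop_ge0 ler01.
apply: sup_range_le => // p; apply: le_trans (chi_term p).
by rewrite /chi_M (min_l (hop_le1 _ _ _ _)).
Qed.

Lemma bi_ideal_fz_chi_sub :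
  (forall y al be, fsubset (fz_fz hop (fz_el hop mu al y) be mu) mu) ->
  forall al be, fsubset (fz_fz hop (fz_fz hop mu al (@chi_M R M)) be mu) mu.
Proof.
move=> bi al be t; have [mu0|mu_nz] := pselect (fzero mu).
  exact: fzero_fz_fz_le.
apply: fz_fz_le_right => x z; apply: min_sup_range_le => // -[p q] /=.
apply: le_trans (le_trans (le_fz_fz _ _ x z t) (bi q al be t)).
apply: le_min2 => //; apply: le_trans (le_fz_el _ _ _ _ mu_nz).
by apply: le_min2 => //; rewrite ge_min lexx.
Qed.

Lemma fz_chi_sub_bi_ideal al be :
  fsubset (fz_fz hop (fz_fz hop mu al (@chi_M R M)) be mu) mu ->
  forall y, fsubset (fz_fz hop (fz_el hop mu al y) be mu) mu.
Proof.
move=> chi_sub y t; apply: le_trans (chi_sub t).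
exact/fz_fz_subl/fz_el_sub_fz_chi.
Qed.

End FuzzyProducts.

Theorem theorem4p12 (R : realType) (M G : Type) (HM : inhabited M) (HG : inhabited G)
  (hop : M -> G -> M -> M -> R) (Hhop : fuzzy_GH_semigroup hop)
  (mu : M -> R) (Hmu : fuzzy_sub_GH_semigroup hop mu) :
  fuzzy_GH_bi_ideal hop mu <->
  (forall al be : G,
     fsubset (fz_fz hop (fz_fz hop mu al (@chi_M R M)) be mu) mu).
Proof.
have [hop_fuzzy _] := Hhop; have [mu_fuzzy _] := Hmu.
split=> [[_ bi] | chi_sub].
- exact: bi_ideal_fz_chi_sub.
- by split=> // y al be; apply: fz_chi_sub_bi_ideal.
Qed.
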